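(* Consider orbit codes in $\mathrm{Gr}_q(k,n)$, each given together with a defining pair $(\mathcal{U},\mathfrak{S})$ with $\mathcal{U}\in\mathrm{Gr}_q(k,n)$ and $\mathfrak{S}<GL_n(\mathbb{F}_q)$. The conjugacy relation $\sim_c$ on orbit codes is an equivalence relation. Moreover, if $\mathcal{C}_1\sim_c\mathcal{C}_2$, then $|\mathcal{C}_1|=|\mathcal{C}_2|$ and $\mathcal{C}_1,\mathcal{C}_2$ have the same distance distribution.
   Context: $\mathrm{Gr}_q(k,n)$ denotes the set of $k$-dimensional subspaces of $\mathbb{F}_q^n$, with subspace distance $d(\mathcal{U}_1,\mathcal{U}_2)=\dim\mathcal{U}_1+\dim\mathcal{U}_2-2\dim(\mathcal{U}_1\cap\mathcal{U}_2)$. $GL_n(\mathbb{F}_q)$ acts on the right on $\mathrm{Gr}_q(k,n)$ by $\mathcal{U}A:=\mathrm{rowsp}(UA)$, where $U\in\mathbb{F}_q^{k\times n}$ is any matrix with $\mathrm{rowsp}(U)=\mathcal{U}$. For $\mathcal{U}\in\mathrm{Gr}_q(k,n)$ and a subgroup $\mathfrak{S}<GL_n(\mathbb{F}_q)$, the orbit code defined by $(\mathcal{U},\mathfrak{S})$ is $\mathcal{C}=\{\mathcal{U}A\mid A\in\mathfrak{S}\}$. Two orbit codes $\mathcal{C}_1$, $\mathcal{C}_2$ defined by $(\mathcal{U}_1,\mathfrak{S}_1)$ and $(\mathcal{U}_2,\mathfrak{S}_2)$ are conjugate, $\mathcal{C}_1\sim_c\mathcal{C}_2$, if there exists $L\in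 GL_n(\mathbb{F}_q)$ with $\mathcal{U}_2=\mathcal{U}_1L$ and $\mathfrak{S}_2=L^{-1}\mathfrak{S}_1L$. The stabilizer of $\mathcal{U}$ is $\mathrm{Stab}(\mathcal{U})=\{A\in GL_n(\mathbb{F}_q)\mid\mathcal{U}A=\mathcal{U}\}$. The distance distribution of the orbit code defined by $(\mathcal{U},\mathfrak{S})$ is the tuple $(D_0,\dots,D_k)$ with $D_i=|\{A\in\mathfrak{S}\mid d(\mathcal{U},\mathcal{U}A)=2i\}|/|\mathfrak{S}\cap\mathrm{Stab}(\mathcal{U})|$. *)

From HB Require Import structures.
From mathcomp Require Import all_boot all_order all_algebra all_fingroup.
Set Implicit Arguments. Unset Strict Implicit. Unset Printing Implicit Defensive.
Import GRing.Theory.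
Local Open Scope ring_scope.

Section OrbitCodes.
Variables (F : finFieldType) (n : nat).

(* A subspace of F^n is represented by any matrix whose row space it is;
   as an element of a code we use the canonical representative <<U>>%MS. *)

Definition GL_subgroup (S : {set 'M[F]_n}) : Prop :=
  [/\ S != set0, {subset S <= unitmx} &
      forall A B, A \in S -> B \in S -> A *m invmx B \in S].

Definition orbit_code k (U : 'M[F]_(k, n)) (S : {set 'M[F]_n}) : {set 'M[F]_n} :=
  [set <<U *m A>>%MS | A in S].

Definition subspace_dist m p (U : 'M[F]_(m, n)) (V : 'M[F]_(p, n)) : nat :=
  (\rank U + \rank V - 2 * \rank (U :&: V)%MS)%N.

Definition Stab k (U : 'M[F]_(k, n)) : {set 'M[F]_n} :=
  [set A : 'M[F]_n | (A \in unitmx) && (U *m A == U)%MS].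

Definition dist_distr k (U : 'M[F]_(k, n)) (S : {set 'M[F]_n}) : {ffun 'I_k.+1 -> rat} :=
  [ffun i : 'I_k.+1 =>
     (#|[set A in S | subspace_dist U (U *m A) == (2 * i)%N]|%:R
      / #|S :&: Stab U|%:R)%R].

Definition conj_codes k (P1 P2 : 'M[F]_(k, n) * {set 'M[F]_n}) : Prop :=
  exists2 L : 'M[F]_n, L \in unitmx &
    (P2.1 == P1.1 *m L)%MS /\
    P2.2 = [set invmx L *m A *m L | A in P1.2].

Definition orbit_pair k (P : 'M[F]_(k, n) * {set 'M[F]_n}) : Prop :=
  \rank P.1 = k /\ GL_subgroup P.2.

End OrbitCodes.

(* Conjugating by L maps the orbit of U under S bijectively onto the orbit of
   U L under L^-1 S L: the subspace U A goes to U A L.  Right multiplication by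
   an invertible matrix preserves ranks of sums and intersections, hence the
   subspace distance, so the orbit sizes, the distances d(U, U A) and the
   stabilizer subgroups all correspond under A |-> L^-1 A L. *)
From HB Require Import structures.
From mathcomp Require Import all_boot all_order all_algebra all_fingroup.
Set Implicit Arguments. Unset Strict Implicit. Unset Printing Implicit Defensive.
Local Open Scope ring_scope.

Lemma card_imset_sep (aT rT : finType) (f : aT -> rT) (S : {set aT}) (Q : pred rT) :
  injective f -> #|[set y in f @: S | Q y]| = #|[set x in S | Q (f x)]|.
Proof.
move=> inj_f; rewrite -(card_imset [set x in S | Q (f x)] inj_f).
apply: eq_card => y; rewrite inE; apply/andP/imsetP => [[/imsetP[x Sx ->] Qfx]|[x]].
  by exists x; rewrite // inE Sx.
by rewrite inE => /andP[Sx Qfx] ->; rewrite imset_f.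
Qed.

Section RowSpaces.
Variable F : fieldType.

Lemma eqmxMfree2 m1 m2 n p (A : 'M[F]_(m1, n)) (B : 'M_(m2, n)) (C : 'M_(n, p)) :
  row_free C -> (A *m C == B *m C)%MS = (A == B)%MS.
Proof. by move=> freeC; rewrite !submxMfree. Qed.

Lemma genmxMfree_inj m1 m2 n p (A : 'M[F]_(m1, n)) (B : 'M_(m2, n)) (C : 'M_(n, p)) :
  row_free C -> <<A *m C>>%MS = <<B *m C>>%MS -> <<A>>%MS = <<B>>%MS.
Proof.
move=> freeC eqAB; apply/eq_genmx/(eqmxMfree freeC).
by apply: eqmx_trans (eqmx_sym (genmxE _)) _; rewrite eqAB; apply: genmxE.
Qed.

Lemma mxrank_capMfree m1 m2 n p (A : 'M[F]_(m1, n)) (B : 'M_(m2, n)) (C : 'M_(n, p)) :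
  row_free C -> \rank (A *m C :&: B *m C)%MS = \rank (A :&: B)%MS.
Proof.
move=> freeC; apply: (@addnI (\rank (A + B)%MS)).
rewrite mxrank_sum_cap -(mxrankMfree _ freeC) addsmxMr.
by rewrite mxrank_sum_cap !mxrankMfree.
Qed.

End RowSpaces.

Section SubspaceDistance.
Variable F : finFieldType.

Lemma subspace_dist_eqmx m1 m2 m3 m4 n (U : 'M[F]_(m1, n)) (V : 'M_(m2, n))
    (U' : 'M_(m3, n)) (V' : 'M_(m4, n)) :
  (U :=: U')%MS -> (V :=: V')%MS -> subspace_dist U V = subspace_dist U' V'.
Proof.
by move=> eqU eqV; rewrite /subspace_dist (cap_eqmx eqU eqV) eqU eqV.
Qed.

Lemma subspace_distMfree m1 m2 n p (U : 'M[F]_(m1, n)) (V : 'M_(m2, n)) (C : 'M_(n, p)) :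
  row_free C -> subspace_dist (U *m C) (V *m C) = subspace_dist U V.
Proof. by move=> freeC; rewrite /subspace_dist !mxrankMfree ?mxrank_capMfree. Qed.

End SubspaceDistance.

Section Conjugation.
Variables (R : comUnitRingType) (n : nat).
Implicit Types (A L M : 'M[R]_n).

Definition rconjmx L A := invmx L *m A *m L.

Lemma invmxM L M : L \in unitmx -> M \in unitmx ->
  invmx (L *m M) = invmx M *m invmx L.
Proof.
move=> uL uM; transitivity (invmx (L *m M) *m (L *m M) *m invmx M *m invmx L).
  by rewrite -!mulmxA mulKVmx // mulmxV // mulmx1.
by rewrite mulVmx ?unitmx_mul ?uL // mul1mx.
Qed.

Lemma rconjmx_inj L : L \in unitmx -> injective (rconjmx L).
Proof.
move=> uL A B /(congr1 (fun X => L *m (X *m invmx L))).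
by rewrite /rconjmx !mulmxK // !mulKVmx.
Qed.

Lemma rconjmx1 A : rconjmx 1%:M A = A.
Proof. by rewrite /rconjmx invmx1 mul1mx mulmx1. Qed.

Lemma rconjmxK L A : L \in unitmx -> rconjmx (invmx L) (rconjmx L A) = A.
Proof. by move=> uL; rewrite /rconjmx invmxK !mulmxA mulmxV // mul1mx mulmxK. Qed.

Lemma rconjmxM L M A : L \in unitmx -> M \in unitmx ->
  rconjmx (L *m M) A = rconjmx M (rconjmx L A).
Proof. by move=> uL uM; rewrite /rconjmx invmxM // !mulmxA. Qed.

End Conjugation.

Section ConjugateSets.
Variables (R : finComUnitRingType) (n : nat).
Implicit Types (L M : 'M[R]_n) (S : {set 'M[R]_n}).

Lemma rconj_set1 S : rconjmx 1%:M @: S = S.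
Proof. by rewrite -[RHS]imset_id; apply: eq_imset => A; rewrite rconjmx1. Qed.

Lemma rconj_setK L S : L \in unitmx -> rconjmx (invmx L) @: (rconjmx L @: S) = S.
Proof.
move=> uL; rewrite -imset_comp -[RHS]imset_id.
by apply: eq_imset => A /=; rewrite rconjmxK.
Qed.

Lemma rconj_setM L M S : L \in unitmx -> M \in unitmx ->
  rconjmx (L *m M) @: S = rconjmx M @: (rconjmx L @: S).
Proof.
by move=> uL uM; rewrite -imset_comp; apply: eq_imset => A /=; rewrite rconjmxM.
Qed.

End ConjugateSets.

Section ConjugateCodes.
Variables (F : finFieldType) (n k : nat).
Implicit Types (X Y Z : 'M[F]_(k, n) * {set 'M[F]_n}) (A L : 'M[F]_n).
Implicit Types (S : {set 'M[F]_n}).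

Lemma conj_codesE X Y :
  conj_codes X Y <->
  exists2 L, L \in unitmx & (Y.1 == X.1 *m L)%MS /\ Y.2 = rconjmx L @: X.2.
Proof. by []. Qed.

Lemma conj_codes_refl X : conj_codes X X.
Proof.
apply/conj_codesE; exists 1%:M; first exact: unitmx1.
by rewrite mulmx1 rconj_set1; split=> //; apply/eqmxP.
Qed.

Lemma conj_codes_sym X Y : conj_codes X Y -> conj_codes Y X.
Proof.
move=> /conj_codesE[L uL [eqU eqS]]; apply/conj_codesE; rewrite eqS.
exists (invmx L); rewrite ?unitmx_inv ?rconj_setK //; split=> //.
have freeL : row_free L by rewrite row_free_unit.
by rewrite -(eqmxMfree2 _ _ freeL) mulmxKV //; apply/eqmxP/eqmx_sym/eqmxP.
Qed.

Lemma conj_codes_trans X Y Z : conj_codes X Y -> conj_codes Y Z -> conj_codes X Z.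
Proof.
move=> /conj_codesE[L uL [/eqmxP eqXY eqSY]] /conj_codesE[M uM [/eqmxP eqYZ eqSZ]].
apply/conj_codesE; rewrite eqSZ eqSY.
exists (L *m M); rewrite ?unitmx_mul ?uL ?rconj_setM //.
split=> //; apply/eqmxP/(eqmx_trans eqYZ).
by rewrite mulmxA; apply: eqmxMr.
Qed.

Section Invariants.
Variables (U1 U2 : 'M[F]_(k, n)) (L : 'M[F]_n).
Hypotheses (uL : L \in unitmx) (eqU : (U2 :=: U1 *m L)%MS).

Let freeL : row_free L. Proof. by rewrite row_free_unit. Qed.

Lemma mulmx_rconj A : (U2 *m rconjmx L A :=: U1 *m A *m L)%MS.
Proof.
apply: eqmx_trans (eqmxMr _ eqU) _.
by rewrite /rconjmx !mulmxA mulmxK //; apply: eqmx_refl.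
Qed.

Lemma orbit_code_rconj S :
  orbit_code U2 (rconjmx L @: S) = (fun V => <<V *m L>>%MS) @: orbit_code U1 S.
Proof.
rewrite /orbit_code -!imset_comp; apply: eq_imset => A /=.
apply: eq_genmx; apply: eqmx_trans (mulmx_rconj A) _.
by apply: eqmxMr; apply: eqmx_sym; apply: genmxE.
Qed.

Lemma card_orbit_code_rconj S :
  #|orbit_code U2 (rconjmx L @: S)| = #|orbit_code U1 S|.
Proof.
rewrite orbit_code_rconj; apply: card_in_imset.
move=> _ _ /imsetP[A _ ->] /imsetP[B _ ->] /(genmxMfree_inj freeL).
by rewrite !genmx_id.
Qed.

Lemma subspace_dist_rconj A :
  subspace_dist U2 (U2 *m rconjmx L A) = subspace_dist U1 (U1 *m A).
Proof. by rewrite (subspace_dist_eqmx eqU (mulmx_rconj A)) subspace_distMfree. Qed.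

Lemma Stab_rconj A : (rconjmx L A \in Stab U2) = (A \in Stab U1).
Proof.
rewrite !inE !unitmx_mul unitmx_inv uL andbT; congr (_ && _).
by rewrite -[(U1 *m A == U1)%MS](eqmxMfree2 _ _ freeL) !mulmx_rconj !eqU.
Qed.

Lemma dist_distr_rconj S : dist_distr U2 (rconjmx L @: S) = dist_distr U1 S.
Proof.
have setI_sep (S' T : {set 'M[F]_n}) : S' :&: T = [set A in S' | A \in T].
  by apply/setP => A; rewrite !inE.
have inj_rconj := rconjmx_inj uL.
apply/ffunP => i; rewrite !ffunE !setI_sep !(card_imset_sep _ _ inj_rconj).
congr (_%:R / _%:R); apply: eq_card => A; rewrite [in LHS]inE [in RHS]inE.
  by rewrite subspace_dist_rconj.
by rewrite Stab_rconj.
Qed.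

End Invariants.

End ConjugateCodes.

Theorem mainTheorem5 (F : finFieldType) (k n : nat) :
  let P := fun X : 'M[F]_(k, n) * {set 'M[F]_n} => orbit_pair X in
  (forall X, P X -> conj_codes X X) /\
  (forall X Y, P X -> P Y -> conj_codes X Y -> conj_codes Y X) /\
  (forall X Y Z, P X -> P Y -> P Z ->
     conj_codes X Y -> conj_codes Y Z -> conj_codes X Z) /\
  (forall X Y, P X -> P Y -> conj_codes X Y ->
     #|orbit_code X.1 X.2| = #|orbit_code Y.1 Y.2| /\
     dist_distr X.1 X.2 = dist_distr Y.1 Y.2).
Proof.
move=> P; split; [|split; [|split]].
- by move=> X _; apply: conj_codes_refl.
- by move=> X Y _ _; apply: conj_codes_sym.
- by move=> X Y Z _ _ _; apply: conj_codes_trans.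
- move=> [U1 S1] [U2 S2] _ _ /conj_codesE[L uL [/= /eqmxP eqU ->]].
  by rewrite (card_orbit_code_rconj uL eqU) (dist_distr_rconj uL eqU).
Qed.
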